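(* Let $0\to N\to G\xrightarrow{p} Q\to 1$ be a short exact sequence of groups with $N$ abelian (written additively), and let $End^Q_N(G)$ be the set of endomorphisms $\alpha$ of $G$ with $\alpha(N)\subseteq N$ and $p\circ\alpha=p$, equipped with the ring structure with addition $(\alpha_1\boxplus\alpha_2)(x)=\alpha_1(x)-x+\alpha_2(x)$, multiplication $(\alpha_2\boxtimes\alpha_1)(x)=\alpha_2(\alpha_1(x))-\alpha_1(x)+x-\alpha_2(x)+x$ and zero element $\mathrm{id}_G$. Then for all $f,g\in End^Q_N(G)$ one has $f\ast g=f\circ g$, where $f\ast g:=f\boxplus g\boxplus(f\boxtimes g)$. In particular the group $QR(End^Q_N(G))$ of quasi-regular elements coincides with the group $Aut^Q_N(G)$ of automorphisms in $End^Q_N(G)$ under composition.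
   Context: For a ring $R$ with zero $0$, $r\ast s:=r+s+rs$; $r$ is quasi-regular if there is $s$ with $r\ast s=0=s\ast r$, and the quasi-regular elements form a group $QR(R)$ under $\ast$. *)

From HB Require Import structures.
From mathcomp Require Import all_boot.
Set Implicit Arguments. Unset Strict Implicit. Unset Printing Implicit Defensive.

(* Groups G, Q are MathComp (possibly infinite) groupTypes, written
   multiplicatively: the paper's additive  a - b + c  is  a * b^-1 * c. *)
Local Open Scope group_scope.

Section EndQN.
Variables (G Q : groupType) (N : pred G) (p : G -> Q).

Definition EndQN (a : G -> G) : Prop :=
  [/\ monoid_morphism a, {in N, forall x, a x \in N} & forall x, p (a x) = p x].

Definition boxplus (a1 a2 : G -> G) : G -> G := fun x => a1 x * x^-1 * a2 x.

Definition boxtimes (a2 a1 : G -> G) : G -> G :=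
  fun x => a2 (a1 x) * (a1 x)^-1 * x * (a2 x)^-1 * x.

Definition qstar (f g : G -> G) : G -> G := boxplus (boxplus f g) (boxtimes f g).

Definition quasi_regular (f : G -> G) : Prop :=
  exists2 s, EndQN s & qstar f s = id /\ qstar s f = id.

Definition AutQN (f : G -> G) : Prop := EndQN f /\ bijective f.
End EndQN.

From HB Require Import structures.
From mathcomp Require Import all_boot.
From Stdlib Require Import FunctionalExtensionality.
Local Open Scope group_scope.

(* Every alpha in End^Q_N(G) moves each x only by an element of N: alpha(x) = d_alpha(x) + x with
   d_alpha(x) in N.  Expanding f * g with a = d_f(x), b = d_g(x), c = d_f(g x), the commutativity
   of N collapses it to c + b + x = f(g x).  Hence quasi-regularity in End^Q_N(G) is invertibility
   under composition, and the inverse of a bijection in End^Q_N(G) is again in End^Q_N(G). *)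

Section EndQN_theory.
Variables (G Q : groupType) (N : pred G) (p : G -> Q).
Hypotheses (p_morph : monoid_morphism p) (kerp : forall x, p x = 1 <-> x \in N).

Lemma EndQN_displacement_in (f : G -> G) x : EndQN N p f -> f x * x^-1 \in N.
Proof.
case=> _ _ pf; apply/kerp.
by rewrite p_morph.2 pf -p_morph.2 mulgV p_morph.1.
Qed.

Hypotheses (N_group : group_closed N) (N_comm : {in N &, forall x y, x * y = y * x}).

Lemma qstar_comp (f g : G -> G) : EndQN N p f -> EndQN N p g -> qstar f g = f \o g.
Proof.
move=> Ef Eg; apply: functional_extensionality => x.
rewrite /qstar /boxplus /boxtimes /=.
set a := f x * x^-1; set b := g x * x^-1; set c := f (g x) * (g x)^-1.
have Na : a \in N by exact: EndQN_displacement_in.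
have Nb : b \in N by exact: EndQN_displacement_in.
have Nc : c \in N by exact: EndQN_displacement_in.
have -> : f x * x^-1 * g x * x^-1 * (f (g x) * (g x)^-1 * x * (f x)^-1 * x)
          = a * (b * c) * a^-1 * x by rewrite /a /b /c !invgM !invgK !mulgA.
rewrite (N_comm _ _ Na (group_closedM N_group Nb Nc)) mulgK (N_comm _ _ Nb Nc).
by rewrite /b /c !mulgA !mulgVK.
Qed.

Lemma EndQN_inverse (f g : G -> G) :
  EndQN N p f -> cancel f g -> cancel g f -> EndQN N p g.
Proof.
case=> [[f1 fM] _ pf] fK gK; have pg x : p (g x) = p x by rewrite -pf gK.
split=> //.
- split; first by apply: (can_inj fK); rewrite gK f1.
  by move=> x y; apply: (can_inj fK); rewrite fM !gK.
- by move=> x /kerp px; apply/kerp; rewrite pg.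
Qed.

Lemma quasi_regular_AutQN (f : G -> G) :
  EndQN N p f -> quasi_regular N p f <-> AutQN N p f.
Proof.
move=> Ef; split.
  case=> s Es []; rewrite !qstar_comp // => fs_id sf_id; split=> //.
  by exists s => x; [move/(congr1 (@^~ x)): sf_id | move/(congr1 (@^~ x)): fs_id].
case=> _ [g fK gK]; have Eg := EndQN_inverse _ _ Ef fK gK.
by exists g; rewrite // !qstar_comp //; split; apply: functional_extensionality.
Qed.

End EndQN_theory.

Theorem lemma14 (G Q : groupType) (N : pred G) (p : G -> Q)
  (* N is an abelian subgroup of G *)
  (HN : group_closed N) (HNab : {in N &, forall x y, x * y = y * x})
  (* 0 -> N -> G -p-> Q -> 1 is exact *)
  (Hp : monoid_morphism p) (Hpsurj : forall q : Q, exists x : G, p x = q)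
  (Hker : forall x : G, p x = 1 <-> x \in N) :
  (forall f g : G -> G, EndQN N p f -> EndQN N p g -> qstar f g = f \o g) /\
  (forall f : G -> G, EndQN N p f -> (quasi_regular N p f <-> AutQN N p f)).
Proof.
split=> [f g|f]; first exact: qstar_comp.
exact: quasi_regular_AutQN.
Qed.
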